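(* Let $\mathcal{M}=\langle S,\iota,\mathsf{Act},P,\mathsf{Z},\mathsf{obs}\rangle$ be an MDP. For every trace $\tau\in\mathsf{Z}^+$, the set $V(\mathsf{est}_{\mathsf{MDP}}(\tau))$ is finite.
   Context: An MDP is a tuple $\langle S,\iota,\mathsf{Act},P,\mathsf{Z},\mathsf{obs}\rangle$: finite state set $S$, initial distribution $\iota\in\mathsf{Distr}(S)$, finite action set $\mathsf{Act}$, partial transition function $P\colon S\times\mathsf{Act}\rightharpoonup\mathsf{Distr}(S)$ (write $P(s,\alpha,s')=P(s,\alpha)(s')$), finite observation set $\mathsf{Z}$, observation function $\mathsf{obs}\colon S\to\mathsf{Distr}(\mathsf{Z})$; $\mathsf{AvAct}(s)=\{\alpha\mid P(s,\alpha)\text{ defined}\}\neq\emptyset$. Beliefs: $\mathsf{Bel}=\mathsf{Distr}(S)\cup\{\mathbf{0}\}$, viewed as vectors in $\mathbb{R}^S$. $\mathsf{est}_{\mathsf{MDP}}\colon\mathsf{Z}^+\to2^{\mathsf{Bel}}$: $\mathsf{est}_{\mathsf{MDP}}(z)=\{b_z\}$ with $b_z(s)=\iota(s)\mathsf{obs}(s)(z)/\sum_{\hat s}\iota(\hat s)\mathsf{obs}(\hat s)(z)$ (or $\mathbf{0}$ if the denominator is $0$), and $\mathsf{est}_{\mathsf{MDP}}(\tau\cdot z)=\bigcup_{\mathsf{bel}\in\mathsf{est}_{\mathsf{MDP}}(\tau)}\mathsf{est}^{\mathsf{up}}(\mathsf{bel},z)$, where $\mathsf{bel}'\in\mathsf{est}^{\mathsf{up}}(\mathsf{bel},z)$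 iff there is $\varsigma\colon S\to\mathsf{Distr}(\mathsf{Act})$ with $\varsigma(s)$ supported in $\mathsf{AvAct}(s)$ and $\mathsf{bel}'(s')=\dfrac{\sum_s\mathsf{bel}(s)\sum_\alpha\varsigma(s)(\alpha)P(s,\alpha,s')\mathsf{obs}(s')(z)}{\sum_s\mathsf{bel}(s)\sum_\alpha\varsigma(s)(\alpha)\sum_{\hat s}P(s,\alpha,\hat s)\mathsf{obs}(\hat s)(z)}$ for all $s'$ ($0/0=0$). For $B\subseteq\mathsf{Bel}$, $V(B)$ is the set of elements of $B$ that are not convex combinations of other elements of $B$ (vertices of the convex hull of $B$). *)

From HB Require Import structures.
From mathcomp Require Import all_boot all_order all_algebra.
From mathcomp Require Import boolp classical_sets cardinality reals.
Set Implicit Arguments. Unset Strict Implicit. Unset Printing Implicit Defensive.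
Import Order.TTheory GRing.Theory Num.Theory.
Local Open Scope ring_scope.
Local Open Scope classical_set_scope.

Section MDPDefs.
Variables (R : realType) (S Act Z : finType).

Definition is_distr (T : finType) (f : T -> R) : Prop :=
  (forall t, 0 <= f t) /\ \sum_(t : T) f t = 1.

(* An MDP <S, iota, Act, P, Z, obs>; the partial transition function is
   P : S -> Act -> option (S -> R), with P s a = None meaning undefined. *)
Record MDP := {
  iota : S -> R;
  iota_distr : is_distr iota;
  trans : S -> Act -> option (S -> R);
  trans_distr : forall s a d, trans s a = Some d -> is_distr d;
  avact_nonempty : forall s, exists a, trans s a <> None;
  obs : S -> Z -> R;
  obs_distr : forall s, is_distr (obs s)
}.

Variable M : MDP.

Definition AvAct (s : S) (a : Act) : Prop := trans M s a <> None.

(* P(s, a, s'), used only for available actions *)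
Definition Pt (s : S) (a : Act) (s' : S) : R :=
  match trans M s a with Some d => d s' | None => 0 end.

Definition belief := S -> R.

(* Initial belief b_z; MathComp division by 0 yields 0, i.e. b_z = 0
   when the denominator vanishes. *)
Definition init_belief (z : Z) : belief :=
  fun s => iota M s * obs M s z / \sum_(sh : S) iota M sh * obs M sh z.

(* bel' \in est^up(bel, z) ; 0/0 = 0 holds by MathComp's x/0 = 0. *)
Definition est_up (bel : belief) (z : Z) (bel' : belief) : Prop :=
  exists sigma : S -> Act -> R,
    (forall s a, 0 <= sigma s a) /\
    (forall s, \sum_(a : Act) sigma s a = 1) /\
    (forall s a, ~ AvAct s a -> sigma s a = 0) /\
    (forall s', bel' s' =
       (\sum_(s : S) bel s * \sum_(a : Act) sigma s a * Pt s a s' * obs M s' z) /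
       (\sum_(s : S) bel s * \sum_(a : Act) sigma s a *
            \sum_(sh : S) Pt s a sh * obs M sh z)).

(* est_MDP on a nonempty trace z0 :: zs (i.e. z0 z1 ... zn). *)
Definition est_MDP (z0 : Z) (zs : seq Z) : set belief :=
  foldl (fun B z => [set b' | exists2 b, B b & est_up b z b'])
        [set init_belief z0] zs.

End MDPDefs.

Definition cvx_comb_of (R : realType) (S : finType) (A : set (S -> R)) (b : S -> R) : Prop :=
  exists (n : nat) (w : 'I_n -> R) (x : 'I_n -> S -> R),
    (forall i, 0 <= w i) /\ \sum_(i < n) w i = 1 /\ (forall i, A (x i)) /\
    (forall s, b s = \sum_(i < n) w i * x i s).

Definition vertices (R : realType) (S : finType) (B : set (S -> R)) : set (S -> R) :=
  [set b | B b /\ ~ cvx_comb_of (B `\ b) b].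

From mathcomp Require Import all_boot all_order all_algebra.
From mathcomp Require Import boolp classical_sets cardinality reals.
From mathcomp Require Import ring.
Set Implicit Arguments. Unset Strict Implicit. Unset Printing Implicit Defensive.
Import Order.TTheory GRing.Theory Num.Theory.
Local Open Scope ring_scope.
Local Open Scope classical_set_scope.

(* Every reachable belief set B is "finitely generated": some finite family of
   elements of B has B in its convex hull, so every vertex of B belongs to that
   family.  The invariant survives an update step because the numerator and the
   denominator of the update are linear in the belief and, once the randomised
   choice sigma is expanded as a mixture of deterministic choices d weighted by
   prod_s sigma(s)(d s), linear in sigma as well.  Hence the updated belief is a
   convex combination of the finitely many updates of the generators under
   deterministic choices, plus the zero belief for a vanishing denominator. *)

Section ConvexGeneration.
Variables (R : realType) (S : finType).

Definition conv_comb (I : finType) (x : I -> S -> R) (b : S -> R) : Prop :=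
  exists w : I -> R, [/\ forall i, 0 <= w i, \sum_i w i = 1 &
                         forall s, b s = \sum_i w i * x i s].

Definition finitely_generated (B : set (S -> R)) : Prop :=
  exists (I : finType) (x : I -> S -> R),
    (forall i, B (x i)) /\ forall b, B b -> conv_comb x b.

Lemma finitely_generated_of_supported (B : set (S -> R)) (J : finType)
    (y : J -> S -> R) :
  (forall b, B b -> exists w : J -> R,
     [/\ forall j, 0 <= w j, \sum_j w j = 1, forall j, w j != 0 -> B (y j) &
         forall s, b s = \sum_j w j * y j s]) ->
  finitely_generated B.
Proof.
move=> comb_y; have [[b0 Bb0]|noB] := pselect (exists b, B b); last first.
  exists 'I_0, (fun _ _ => 0); split; first by case.
  by move=> b Bb; case: noB; exists b.
pose y' j := if pselect (B (y j)) then y j else b0.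
exists J, y'; split=> [j|b Bb]; first by rewrite /y'; case: pselect.
have [w [w_ge0 w_sum1 w_supp bE]] := comb_y b Bb.
exists w; split=> // s; rewrite bE; apply: eq_bigr => j _.
have [->|/w_supp Byj] := eqVneq (w j) 0; first by rewrite !mul0r.
by rewrite /y'; case: pselect.
Qed.

Lemma cvx_comb_of_conv_comb (A : set (S -> R)) (I : finType) (x : I -> S -> R)
    (b : S -> R) :
  (forall i, A (x i)) -> conv_comb x b -> cvx_comb_of A b.
Proof.
move=> Ax [w [w_ge0 w_sum1 bE]].
have enumE F : \sum_(i : I) F i = \sum_(k < #|I|) F (enum_val k) :> R.
  exact: (big_enum_val (A := (pred_of_argType I : pred I))).
exists #|I|, (w \o enum_val), (x \o enum_val).
split=> [k|]; first exact: w_ge0.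
split; first by rewrite -enumE.
by split=> [k|s]; [exact: Ax | rewrite bE (enumE (fun i => w i * x i s))].
Qed.

Lemma finite_vertices (B : set (S -> R)) :
  finitely_generated B -> finite_set (vertices B).
Proof.
move=> [I [x [Bx comb_x]]].
apply: (sub_finite_set _ (finite_image x (@finite_finset I setT))).
move=> b [Bb not_comb]; have [[i _ <-]|not_x] := pselect (range x b).
  by exists i.
case: not_comb; apply: cvx_comb_of_conv_comb (comb_x b Bb) => i.
by split=> // xib; apply: not_x; exists i.
Qed.

End ConvexGeneration.

Section Policies.
Variables (R : comPzSemiRingType) (S A : finType).

Definition policy_avg (b : S -> R) (g : S -> A -> R) (sigma : S -> A -> R) : R :=
  \sum_s b s * \sum_a sigma s a * g s a.

Definition det_policy (d : {ffun S -> A}) : S -> A -> R :=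
  fun s a => (a == d s)%:R.

Definition policy_weight (sigma : S -> A -> R) (d : {ffun S -> A}) : R :=
  \prod_s sigma s (d s).

Lemma sum_det_policyM d s (F : A -> R) : \sum_a det_policy d s a * F a = F (d s).
Proof.
rewrite (bigD1 (d s)) //= big1 => [|a /negbTE nda].
  by rewrite /det_policy eqxx mul1r addr0.
by rewrite /det_policy nda mul0r.
Qed.

Lemma sum_det_policy d s : \sum_a det_policy d s a = 1.
Proof.
by have := sum_det_policyM d s (fun _ => 1); under eq_bigr do rewrite mulr1.
Qed.

Lemma policy_avg_det b g d : policy_avg b g (det_policy d) = \sum_s b s * g s (d s).
Proof. by apply: eq_bigr => s _; rewrite sum_det_policyM. Qed.

Lemma sum_policy_weight_marginal sigma (F : A -> R) s0 :
  (forall s, \sum_a sigma s a = 1) ->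
  \sum_d policy_weight sigma d * F (d s0) = \sum_a sigma s0 a * F a.
Proof.
move=> sigma_sum1; pose G s a := sigma s a * (if s == s0 then F a else 1).
have distr : \prod_s \sum_a G s a = \sum_(d : {ffun S -> A}) \prod_s G s (d s).
  exact: bigA_distr_bigA.
have others1 : \prod_(s | s != s0) \sum_a G s a = 1.
  apply: big1 => s /negbTE ns0; rewrite /G.
  by under eq_bigr do rewrite ns0 mulr1.
rewrite (bigD1 s0) //= others1 mulr1 in distr.
have -> : \sum_a sigma s0 a * F a = \sum_a G s0 a.
  by apply: eq_bigr => a _; rewrite /G eqxx.
rewrite distr; apply: eq_bigr => d _.
rewrite /policy_weight (bigD1 s0) //= [in RHS](bigD1 s0) //= {1}/G eqxx mulrAC.
by congr (_ * _); apply: eq_bigr => s /negbTE ns0; rewrite /G ns0 mulr1.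
Qed.

Lemma policy_avg_mixture sigma b g :
  (forall s, \sum_a sigma s a = 1) ->
  \sum_d policy_weight sigma d * policy_avg b g (det_policy d)
  = policy_avg b g sigma.
Proof.
move=> sigma_sum1; under eq_bigr do rewrite policy_avg_det mulr_sumr.
rewrite exchange_big; apply: eq_bigr => s _.
rewrite (sum_policy_weight_marginal (fun a => b s * g s a)) // mulr_sumr.
by apply: eq_bigr => a _; rewrite mulrCA.
Qed.

Lemma policy_avg_comb (I : finType) (w : I -> R) (x : I -> S -> R) b g sigma :
  (forall s, b s = \sum_i w i * x i s) ->
  policy_avg b g sigma = \sum_i w i * policy_avg (x i) g sigma.
Proof.
move=> bE; rewrite /policy_avg; under eq_bigr do rewrite bE mulr_suml.
rewrite exchange_big; apply: eq_bigr => i _; rewrite mulr_sumr.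
by apply: eq_bigr => s _; rewrite mulrA.
Qed.

Lemma policy_avg_comb_mixture (I : finType) (w : I -> R) (x : I -> S -> R)
    b g sigma :
  (forall s, \sum_a sigma s a = 1) -> (forall s, b s = \sum_i w i * x i s) ->
  \sum_(p : I * {ffun S -> A})
     w p.1 * policy_weight sigma p.2 * policy_avg (x p.1) g (det_policy p.2)
  = policy_avg b g sigma.
Proof.
move=> sigma_sum1 bE; rewrite (policy_avg_comb _ _ bE).
rewrite -(pair_bigA _ (fun i d =>
  w i * policy_weight sigma d * policy_avg (x i) g (det_policy d))) /=.
apply: eq_bigr => i _; rewrite -(policy_avg_mixture _ _ sigma_sum1) mulr_sumr.
by apply: eq_bigr => d _; rewrite mulrA.
Qed.

End Policies.

Arguments det_policy {R S A} d.

Section BeliefUpdate.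
Variables (R : realType) (S Act Z : finType) (M : MDP R S Act Z).

Definition policy (sigma : S -> Act -> R) : Prop :=
  [/\ forall s a, 0 <= sigma s a, forall s, \sum_a sigma s a = 1 &
      forall s a, ~ AvAct M s a -> sigma s a = 0].

Definition upd_num (z : Z) (b : belief R S) (sigma : S -> Act -> R) (s' : S) : R :=
  policy_avg b (fun s a => Pt M s a s' * obs M s' z) sigma.

Definition upd_den (z : Z) (b : belief R S) (sigma : S -> Act -> R) : R :=
  policy_avg b (fun s a => \sum_sh Pt M s a sh * obs M sh z) sigma.

Definition est_step (B : set (belief R S)) (z : Z) : set (belief R S) :=
  [set b' | exists2 b, B b & est_up M b z b'].

Definition nonneg (b : belief R S) : Prop := forall s, 0 <= b s.

Lemma est_upE b z b' :
  est_up M b z b' <->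
  exists2 sigma, policy sigma &
    forall s', b' s' = upd_num z b sigma s' / upd_den z b sigma.
Proof.
have numE sigma s' : upd_num z b sigma s'
    = \sum_s b s * \sum_a sigma s a * Pt M s a s' * obs M s' z.
  by apply: eq_bigr => s _; congr (_ * _); apply: eq_bigr => a _; rewrite mulrA.
split=> [[sigma [h0 [h1 [h2 b'E]]]]|[sigma [h0 h1 h2] b'E]].
  by exists sigma => [|s']; [split | rewrite b'E numE].
by exists sigma; split=> //; split=> //; split=> // s'; rewrite b'E numE.
Qed.

Lemma Pt_ge0 s a s' : 0 <= Pt M s a s'.
Proof.
by rewrite /Pt; case E: (trans M s a) => [d|] //; have [] := trans_distr E.
Qed.

Lemma obs_ge0 s z : 0 <= obs M s z.
Proof. by have [] := obs_distr M s. Qed.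

Lemma policy_avg_ge0 b (g sigma : S -> Act -> R) :
  nonneg b -> (forall s a, 0 <= g s a) -> (forall s a, 0 <= sigma s a) ->
  0 <= policy_avg b g sigma.
Proof.
move=> b_ge0 g_ge0 sigma_ge0; apply: sumr_ge0 => s _; rewrite mulr_ge0 //.
by apply: sumr_ge0 => a _; rewrite mulr_ge0.
Qed.

Lemma upd_den_sum z b sigma : upd_den z b sigma = \sum_s' upd_num z b sigma s'.
Proof.
rewrite /upd_num /upd_den /policy_avg exchange_big; apply: eq_bigr => s _.
rewrite -mulr_sumr exchange_big; congr (_ * _); apply: eq_bigr => a _.
by rewrite mulr_sumr.
Qed.

Lemma upd_num_ge0 z b sigma s' : nonneg b -> (forall s a, 0 <= sigma s a) ->
  0 <= upd_num z b sigma s'.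
Proof.
by move=> ? ?; apply: policy_avg_ge0 => // s a; rewrite mulr_ge0 ?Pt_ge0 ?obs_ge0.
Qed.

Lemma upd_den_ge0 z b sigma : nonneg b -> (forall s a, 0 <= sigma s a) ->
  0 <= upd_den z b sigma.
Proof.
by move=> ? ?; rewrite upd_den_sum sumr_ge0 // => s' _; apply: upd_num_ge0.
Qed.

Lemma upd_num_eq0 z b sigma s' : nonneg b -> (forall s a, 0 <= sigma s a) ->
  upd_den z b sigma = 0 -> upd_num z b sigma s' = 0.
Proof.
move=> b_ge0 sigma_ge0; rewrite upd_den_sum => /psumr_eq0P-> //.
by move=> s _; apply: upd_num_ge0.
Qed.

Lemma policy_det (sigma : S -> Act -> R) d :
  policy sigma -> policy_weight sigma d != 0 -> policy (det_policy d).
Proof.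
move=> [_ _ sigma_av] nz_d; split=> [s a|s|s a not_av]; first by rewrite ler0n.
  exact: sum_det_policy.
rewrite /det_policy; case: eqP => // ad; move: nz_d.
by rewrite /policy_weight (bigD1 s) //= -ad sigma_av ?mul0r ?eqxx.
Qed.

Lemma est_step_ge0 B z : (forall b, B b -> nonneg b) ->
  forall b', est_step B z b' -> nonneg b'.
Proof.
move=> B_ge0 b' [b /B_ge0 b_ge0 /est_upE[sigma [sigma_ge0 _ _] b'E]] s'.
by rewrite b'E divr_ge0 ?upd_num_ge0 ?upd_den_ge0.
Qed.

Section Step.
Variables (B : set (belief R S)) (z : Z) (I : finType) (x : I -> belief R S).
Hypotheses (B_ge0 : forall b, B b -> nonneg b) (Bx : forall i, B (x i)).

Definition det_update (p : I * {ffun S -> Act}) : belief R S :=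
  fun s' =>
    upd_num z (x p.1) (det_policy p.2) s' / upd_den z (x p.1) (det_policy p.2).

Definition det_update_weight (w : I -> R) (b : belief R S) sigma
    (p : I * {ffun S -> Act}) : R :=
  w p.1 * policy_weight sigma p.2 * upd_den z (x p.1) (det_policy p.2)
  / upd_den z b sigma.

Lemma det_update_in p (w : I -> R) b sigma : policy sigma ->
  det_update_weight w b sigma p != 0 -> est_step B z (det_update p).
Proof.
move=> sigma_pol; rewrite !mulf_eq0 !negb_or => /andP[/andP[/andP[_ nz_p2] _] _].
exists (x p.1) => //; apply/est_upE; exists (det_policy p.2) => //.
exact: policy_det nz_p2.
Qed.

Lemma det_update_comb (w : I -> R) b sigma :
  (forall i, 0 <= w i) -> (forall s, b s = \sum_i w i * x i s) ->
  policy sigma -> upd_den z b sigma != 0 ->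
  [/\ forall p, 0 <= det_update_weight w b sigma p,
      \sum_p det_update_weight w b sigma p = 1 &
      forall s', upd_num z b sigma s' / upd_den z b sigma
                 = \sum_p det_update_weight w b sigma p * det_update p s'].
Proof.
move=> w_ge0 bE [sigma_ge0 sigma_sum1 _] den_nz.
have x_ge0 i : nonneg (x i) by apply: B_ge0.
have b_ge0 : nonneg b.
  by move=> s; rewrite bE sumr_ge0 // => i _; exact: mulr_ge0 (w_ge0 i) (x_ge0 i s).
have den_gt0 : 0 < upd_den z b sigma by rewrite lt0r den_nz upd_den_ge0.
split=> [p|| s'].
- by rewrite divr_ge0 ?mulr_ge0 ?upd_den_ge0 ?prodr_ge0 ?(ltW den_gt0).
- by rewrite -mulr_suml (policy_avg_comb_mixture _ sigma_sum1 bE) divff.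
rewrite -[upd_num z b sigma s'](policy_avg_comb_mixture _ sigma_sum1 bE) mulr_suml.
apply: eq_bigr => -[i d] _; rewrite /det_update_weight /det_update /=.
rewrite -/(upd_num z (x i) (det_policy d) s').
have [den0|den_nz'] := eqVneq (upd_den z (x i) (det_policy d)) 0.
  by rewrite den0 (upd_num_eq0 _ _ _ den0) // !(mulr0, mul0r).
by field; apply/andP.
Qed.

Lemma est_step_generated :
  (forall b, B b -> conv_comb x b) -> finitely_generated (est_step B z).
Proof.
move=> comb_x; pose y (j : 'I_1 + (I * {ffun S -> Act})) : belief R S :=
  if j is inr p then det_update p else fun _ => 0.
apply: (finitely_generated_of_supported (y := y)) => b' [b Bb b_upd].
have [w [w_ge0 _ bE]] := comb_x b Bb.
have /est_upE[sigma sigma_pol b'E] := b_upd.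
have [den0|den_nz] := eqVneq (upd_den z b sigma) 0.
  have b'0 : b' = fun _ => 0.
    by apply: funext => s'; rewrite b'E den0 invr0 mulr0.
  exists (fun j => if j is inl _ then 1 else 0); split.
  - by case=> _ //; rewrite ler01.
  - by rewrite big_sumType /= big_ord1 big1 ?addr0.
  - case=> [k _|p]; last by rewrite eqxx.
    by rewrite /y /= -b'0; exists b.
  - move=> s; rewrite b'0 big_sumType /= big_ord1 big1 ?addr0 ?mulr0 //.
    by move=> p _; rewrite mul0r.
have [W_ge0 W_sum1 W_comb] := det_update_comb w_ge0 bE sigma_pol den_nz.
exists (fun j => if j is inr p then det_update_weight w b sigma p else 0); split.
- by case.
- by rewrite big_sumType /= big1 ?add0r.
- case=> [k|p nz_p]; first by rewrite eqxx.
  exact: det_update_in sigma_pol nz_p.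
- by move=> s; rewrite b'E W_comb big_sumType /= big_ord1 mul0r add0r.
Qed.

End Step.

Lemma init_belief_generated z0 :
  (forall b, [set init_belief M z0] b -> nonneg b) /\
  finitely_generated [set init_belief M z0].
Proof.
have [iota_ge0 _] := iota_distr M; split.
  move=> _ -> s; rewrite divr_ge0 ?mulr_ge0 ?obs_ge0 ?sumr_ge0 // => sh _.
  by rewrite mulr_ge0 ?obs_ge0.
exists 'I_1, (fun _ => init_belief M z0); split=> // _ ->.
by exists (fun _ => 1); split=> [_||s]; rewrite ?big_ord1 ?mul1r.
Qed.

Lemma est_MDP_generated z0 zs : finitely_generated (est_MDP M z0 zs).
Proof.
rewrite /est_MDP -/est_step; have := init_belief_generated z0.
elim: zs [set init_belief M z0] => [|z zs IH] B [B_ge0 B_gen] //=.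
have [I [x [Bx comb_x]]] := B_gen.
by apply: IH; split; [exact: est_step_ge0 | exact: est_step_generated Bx comb_x].
Qed.

End BeliefUpdate.

Theorem lemma5 (R : realType) (S Act Z : finType) (M : MDP R S Act Z)
    (z0 : Z) (zs : seq Z) :
  finite_set (vertices (est_MDP M z0 zs)).
Proof. exact/finite_vertices/est_MDP_generated. Qed.
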